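(* Let $\theta\in\mathbb{R}$ with $\sin\theta\neq 0$, and put $c=\cos\theta$, $s=\sin\theta$. Let $\mathcal{H}$ be a $3$-dimensional complex Hilbert space with orthonormal basis $\{|E\rangle,|\tau_0\rangle,|\tau_1\rangle\}$, and let $U$ be a unitary operator on $\mathcal{H}$ satisfying the four conditions $$\langle E|U|\tau_0\rangle=0,\qquad c\,\langle E|U|E\rangle+s\,\langle E|U|\tau_1\rangle=0,$$ $$\langle \tau_0|U|\tau_1\rangle=0,\qquad c\,\langle \tau_0|U|E\rangle+s\,\langle \tau_0|U|\tau_0\rangle=0 .$$ Define $P^{(0)}_{\mathrm{cf}}:=|c\,\langle E|U|E\rangle|^2$ and $P^{(1)}_{\mathrm{cf}}:=|c\,\langle \tau_0|U|E\rangle|^2$. Then there is no such unitary $U$ for which both $P^{(0)}_{\mathrm{cf}}>0$ and $P^{(1)}_{\mathrm{cf}}>0$.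
   Context: Physical interpretation (not needed for the mathematics): this is a ''counterfactual clock'' with two distinguishable times $\tau_0,\tau_1$ and no ancilla states. Initially the state is $|E\rangle$; a unitary maps it to $c|E\rangle+s|\psi\rangle$, the clock dynamics $U(t)$ fixes $|E\rangle$ and maps $|\psi\rangle$ to $|\tau_j\rangle$ at time $\tau_j$, then $U$ is applied and one measures. The four displayed conditions are the requirements that outcome $E$ can only arise from the stationary branch and certifies elapsed time $\tau_0$, and that outcome $\tau_0$ can only arise from the stationary branch and certifies elapsed time $\tau_1$; $P^{(0)}_{\mathrm{cf}}$ and $P^{(1)}_{\mathrm{cf}}$ are the probabilities of these two counterfactual outcomes. *)

From mathcomp Require Import all_boot all_order all_algebra.
From mathcomp Require Import complex.
From mathcomp Require Import all_classical all_reals all_analysis.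
Set Implicit Arguments. Unset Strict Implicit. Unset Printing Implicit Defensive.
Import Order.TTheory GRing.Theory Num.Theory.
Local Open Scope ring_scope.

(* Basis indices of the 3-dimensional Hilbert space C^3:
   |E> = e_0, |tau_0> = e_1, |tau_1> = e_2 ;  <a|U|b> = U a b. *)
Definition iE : 'I_3 := @Ordinal 3 0 isT.
Definition itau0 : 'I_3 := @Ordinal 3 1 isT.
Definition itau1 : 'I_3 := @Ordinal 3 2 isT.

From mathcomp Require Import all_boot all_order all_algebra.
From mathcomp Require Import complex.
From mathcomp Require Import all_classical all_reals all_analysis.
Import Order.TTheory GRing.Theory Num.Theory.
Local Open Scope ring_scope.
Local Open Scope complex_scope.

(* Rows E and tau_0 of a unitary U are orthogonal.  Since U_{E tau_0} = 0 and
   U_{tau_0 tau_1} = 0, only the E-component of their inner product survives,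
   so U_{E E} * conj U_{tau_0 E} = 0 and one of the two counterfactual
   probabilities vanishes. *)

Section UnitaryRows.
Set Implicit Arguments. Unset Strict Implicit.
Context {C : numClosedFieldType} {m n : nat}.

Lemma unitarymx_rows_orthogonal (M : 'M[C]_(m, n)) (i j : 'I_m) :
  M \is unitarymx -> i != j -> \sum_k M i k * (M j k)^* = 0.
Proof.
move=> /unitarymxP /matrixP /(_ i j) + neq_ij.
rewrite !mxE (negbTE neq_ij) /= mulr0n => orth_ij.
by rewrite -[RHS]orth_ij; apply: eq_bigr => k _; rewrite !mxE.
Qed.

Lemma unitarymx_rows_disjoint_support (M : 'M[C]_(m, n)) (i j : 'I_m)
    (l : 'I_n) :
  M \is unitarymx -> i != j ->
  (forall k, k != l -> M i k * (M j k)^* = 0) ->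
  M i l = 0 \/ M j l = 0.
Proof.
move=> M_unitary neq_ij others0.
have := unitarymx_rows_orthogonal M_unitary neq_ij.
rewrite (bigD1 l) //= big1 ?addr0 // => /eqP.
by rewrite mulf_eq0 conjC_eq0 => /orP[] /eqP; [left | right].
Qed.

End UnitaryRows.

Theorem proposition1 (R : realType) (theta : R) (U : 'M[R[i]]_3) :
  sin theta != 0 ->
  U \is unitarymx ->
  U iE itau0 = 0 ->
  (cos theta)%:C * U iE iE + (sin theta)%:C * U iE itau1 = 0 ->
  U itau0 itau1 = 0 ->
  (cos theta)%:C * U itau0 iE + (sin theta)%:C * U itau0 itau0 = 0 ->
  ~ (0 < `|(cos theta)%:C * U iE iE| ^+ 2 /\
     0 < `|(cos theta)%:C * U itau0 iE| ^+ 2).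
Proof.
move=> _ U_unitary U_E_tau0 _ U_tau0_tau1 _ [P0_gt0 P1_gt0].
have [] : U iE iE = 0 \/ U itau0 iE = 0.
  apply: (unitarymx_rows_disjoint_support (i := iE) (j := itau0) U_unitary isT).
  case=> [[|[|[|//]]] lt_k3] // _.
    by rewrite (_ : Ordinal lt_k3 = itau0) ?U_E_tau0 ?mul0r //; apply: val_inj.
  by rewrite (_ : Ordinal lt_k3 = itau1) ?U_tau0_tau1 ?conjC0 ?mulr0 //;
    apply: val_inj.
- by move=> U_E_E; move: P0_gt0; rewrite U_E_E mulr0 normr0 expr0n ltxx.
- by move=> U_tau0_E; move: P1_gt0; rewrite U_tau0_E mulr0 normr0 expr0n ltxx.
Qed.
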